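(* Let $R$ be a recursive ring and $\phi:\mathbb{Z}\to R^k$ an injection such that for every $m\ge1$ and every Diophantine subset $A\subseteq\mathbb{Z}^m$ over $\mathbb{Z}$, the image $\phi(A)=\{(\phi(a_1),\ldots,\phi(a_m)):(a_1,\ldots,a_m)\in A\}\subseteq R^{km}$ is Diophantine over $R$. Then $\phi$ is recursive (computable).
   Context: A ring $R$ is recursive if there is an injection of $R$ into $\mathbb{Z}$ with recursive image under which the ring operations correspond to recursive functions. A set $A\subseteq R^n$ is Diophantine over $R$ if there is a polynomial $p(T_1,\ldots,T_n,X_1,\ldots,X_s)$ with coefficients in $R$ such that $(t_1,\ldots,t_n)\in A$ iff $\exists x_1,\ldots,x_s\in R$ with $p(t_1,\ldots,t_n,x_1,\ldots,x_s)=0$. *)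

From HB Require Import structures.
From mathcomp Require Import all_boot all_order all_algebra.
Set Implicit Arguments. Unset Strict Implicit. Unset Printing Implicit Defensive.
Import Order.TTheory GRing.Theory Num.Theory.

(* Arguments are passed as a list; unused arguments are ignored.       *)
Inductive rcode : Type :=
| cZero : rcode
| cSucc : rcode
| cProj : nat -> rcode
| cComp : rcode -> list rcode -> rcode
| cPrec : rcode -> rcode -> rcode
| cMu   : rcode -> rcode.

Inductive all2P (A B : Type) (P : A -> B -> Prop) : list A -> list B -> Prop :=
| all2P_nil : all2P P nil nil
| all2P_cons a b la lb : P a b -> all2P P la lb -> all2P P (a :: la) (b :: lb).

Inductive reval : rcode -> list nat -> nat -> Prop :=
| ev_zero v : reval cZero v 0
| ev_succ x v : reval cSucc (x :: v) x.+1
| ev_proj i v : reval (cProj i) v (nth 0 v i)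
| ev_comp f gs v ys z :
    all2P (fun g y => reval g v y) gs ys -> reval f ys z -> reval (cComp f gs) v z
| ev_prec0 f g v y : reval f v y -> reval (cPrec f g) (0 :: v) y
| ev_precS f g n v y z :
    reval (cPrec f g) (n :: v) y -> reval g (n :: y :: v) z ->
    reval (cPrec f g) (n.+1 :: v) z
| ev_mu f v n :
    reval f (n :: v) 0 -> (forall m, m < n -> exists y, reval f (m :: v) y.+1) ->
    reval (cMu f) v n.

(* Standard bijection Z -> nat (0,-1,1,-2,2,... |-> 0,1,2,3,4,...). *)
Definition zcode (z : int) : nat :=
  match z with Posz n => n.*2 | Negz n => n.*2.+1 end.

Definition recursive1 (f : int -> int) : Prop :=
  exists c, forall a, reval c [:: zcode a] (zcode (f a)).
Definition recursive2 (f : int -> int -> int) : Prop :=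
  exists c, forall a b, reval c [:: zcode a; zcode b] (zcode (f a b)).
Definition recursive_set (P : int -> Prop) : Prop :=
  exists c, forall a, (P a -> reval c [:: zcode a] 1) /\ (~ P a -> reval c [:: zcode a] 0).

Definition recursive_presentation (R : comNzRingType) (e : R -> int) : Prop :=
  [/\ injective e,
      recursive_set (fun z => exists r, e r = z),
      (exists f, recursive2 f /\ forall x y, f (e x) (e y) = e (x + y)%R) &
      (exists f, recursive2 f /\ forall x y, f (e x) (e y) = e (x * y)%R)].

Definition recursive_ring (R : comNzRingType) : Prop :=
  exists e : R -> int, recursive_presentation e.

(* Polynomials with coefficients in R in variables of type V, as terms *)
Inductive pterm (R : Type) (V : Type) : Type :=
| PVar : V -> pterm R V
| PConst : R -> pterm R V
| PAdd : pterm R V -> pterm R V -> pterm R V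
| PMul : pterm R V -> pterm R V -> pterm R V.

Fixpoint peval (R : comNzRingType) (V : Type) (env : V -> R) (p : pterm R V) : R :=
  match p with
  | PVar v => env v
  | PConst c => c
  | PAdd p q => (peval env p + peval env q)%R
  | PMul p q => (peval env p * peval env q)%R
  end.

Definition diophantine (R : comNzRingType) (I : finType) (A : (I -> R) -> Prop) : Prop :=
  exists (s : nat) (p : pterm R (I + 'I_s)),
    forall t : I -> R,
      A t <-> exists x : 'I_s -> R,
                peval (fun v => match v with inl i => t i | inr j => x j end) p = 0%R.

Definition phi_image (R : comNzRingType) (k m : nat) (phi : int -> 'I_k -> R)
  (A : ('I_m -> int) -> Prop) : ('I_m * 'I_k -> R) -> Prop :=
  fun y => exists a, A a /\ forall i j, y (i, j) = phi (a i) j.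

(* The graph of the successor map on Z is Diophantine over Z, so its image
   under phi is defined over R by a polynomial p(T, T', X).  Knowing phi a, one
   finds phi (a + 1) by unbounded search for codes of elements t', x of R with
   p(phi a, t', x) = 0: the recursive presentation of R makes this test
   decidable, and injectivity of phi forces t' = phi (a + 1).  Iterating the
   search from phi 0, and likewise for the predecessor map, computes phi. *)

From HB Require Import structures.
From mathcomp Require Import all_boot all_order all_algebra.
From Stdlib Require Import ClassicalEpsilon.
From mathcomp Require Import zify.
Set Implicit Arguments. Unset Strict Implicit. Unset Printing Implicit Defensive.
Import GRing.Theory.

Definition computable (f : seq nat -> nat) := exists c, forall v, reval c v (f v).
Definition computable1 (f : nat -> nat) := computable (fun v => f (nth 0 v 0)).
Definition computable2 (f : nat -> nat -> nat) :=
  computable (fun v => f (nth 0 v 0) (nth 0 v 1)).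

Fixpoint all_computable (fs : seq (seq nat -> nat)) : Prop :=
  if fs is f :: fs' then computable f /\ all_computable fs' else True.

Lemma computable_ext f g : f =1 g -> computable f -> computable g.
Proof. by move=> fg [c Hc]; exists c => v; rewrite -fg. Qed.

Lemma all_computable_codes fs : all_computable fs ->
  exists cs, forall v, all2P (fun c y => reval c v y) cs [seq f v | f <- fs].
Proof.
elim: fs => [|f fs IH] /=; first by exists [::] => v; constructor.
case=> [[c Hc] /IH [cs Hcs]]; exists (c :: cs) => v; constructor; [exact: Hc | exact: Hcs].
Qed.

Lemma computable_comp f fs : computable f -> all_computable fs ->
  computable (fun v => f [seq g v | g <- fs]).
Proof.
move=> [c Hc] /all_computable_codes [cs Hcs]; exists (cComp c cs) => v.
by apply: ev_comp (Hcs v) (Hc _).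
Qed.

Lemma computable_comp1 f g : computable1 f -> computable g -> computable (fun v => f (g v)).
Proof. by move=> Hf Hg; apply: (computable_comp (fs := [:: g]) Hf). Qed.

Lemma computable_comp2 f g h : computable2 f -> computable g -> computable h ->
  computable (fun v => f (g v) (h v)).
Proof. by move=> Hf Hg Hh; apply: (computable_comp (fs := [:: g; h]) Hf). Qed.

Lemma computable_const n : computable (fun=> n).
Proof.
elim: n => [|n [c Hc]]; first by exists cZero => v; constructor.
exists (cComp cSucc [:: c]) => v; apply: (ev_comp (ys := [:: n])); last exact: ev_succ.
by apply: all2P_cons (Hc v) (all2P_nil _).
Qed.

Lemma computable_proj i : computable (fun v => nth 0 v i).
Proof. by exists (cProj i) => v; constructor. Qed.

Lemma computable_succ : computable1 succn.
Proof.
exists (cComp cSucc [:: cProj 0]) => v; apply: (ev_comp (ys := [:: nth 0 v 0])).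
  by apply: all2P_cons (ev_proj 0 v) (all2P_nil _).
exact: ev_succ.
Qed.

Fixpoint primrec (F G : seq nat -> nat) n w :=
  if n is n'.+1 then G [:: n', primrec F G n' w & w] else F w.

Lemma computable_primrec F G h hs : computable F -> computable G -> computable h ->
  all_computable hs -> computable (fun v => primrec F G (h v) [seq f v | f <- hs]).
Proof.
move=> [cF HF] [cG HG] [ch Hh] /all_computable_codes [cs Hcs].
have Hrec n w : reval (cPrec cF cG) (n :: w) (primrec F G n w).
  by elim: n => [|n IH] /=; [exact: ev_prec0 | exact: ev_precS IH (HG _)].
by exists (cComp (cPrec cF cG) (ch :: cs)) => v; apply: ev_comp (Hrec _ _); constructor.
Qed.

Lemma computable1_rec z (g : nat -> nat -> nat) (f : nat -> nat) :
  computable2 g -> f 0 = z -> (forall n, f n.+1 = g n (f n)) -> computable1 f.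
Proof.
move=> Hg f0 fS; have := computable_primrec (computable_const z) Hg
  (computable_proj 0) (hs := [::]) I.
by apply: computable_ext => v /=; elim: (nth 0 v 0) => //= n ->.
Qed.

Lemma computable2_rec (z : nat -> nat) (g : nat -> nat -> nat -> nat) f :
  computable1 z -> computable (fun w => g (nth 0 w 0) (nth 0 w 1) (nth 0 w 2)) ->
  (forall y, f 0 y = z y) -> (forall n y, f n.+1 y = g n (f n y) y) -> computable2 f.
Proof.
move=> Hz Hg f0 fS; have := computable_primrec Hz Hg (computable_proj 0)
  (hs := [:: fun v => nth 0 v 1]) (conj (computable_proj 1) I).
by apply: computable_ext => v /=; elim: (nth 0 v 0) => [|n IH] /=; rewrite ?fS ?IH.
Qed.

Lemma computable_addn : computable2 addn.
Proof.
apply: (computable2_rec (z := id) (g := fun _ r _ => r.+1)) => //.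
  exact: computable_proj.
exact: computable_comp1 computable_succ (computable_proj 1).
Qed.

Lemma computable_predn : computable1 predn.
Proof. by apply: (computable1_rec (g := fun n _ => n)) => //; exact: computable_proj. Qed.

Lemma computable_subn : computable2 subn.
Proof.
have Hsubr : computable2 (fun y x => x - y).
  apply: (computable2_rec (z := id) (g := fun _ r _ => r.-1)) => //.
  - exact: computable_proj.
  - exact: computable_comp1 computable_predn (computable_proj 1).
  - by move=> y; rewrite subn0.
  - by move=> n y; rewrite subnS.
exact: computable_comp2 Hsubr (computable_proj 1) (computable_proj 0).
Qed.

Definition distn x y := (x - y) + (y - x).

Lemma distn_eq0 x y : (distn x y == 0) = (x == y).
Proof. by rewrite addn_eq0 !subn_eq0 -eqn_leq. Qed.

Lemma computable_distn : computable2 distn.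
Proof.
apply: computable_comp2 computable_addn _ _;
  exact: computable_comp2 computable_subn (computable_proj _) (computable_proj _).
Qed.

Lemma computable_leqn : computable2 (fun x y => x <= y : nat).
Proof.
apply: computable_ext (computable_comp2 computable_subn (computable_const 1)
  (computable_comp2 computable_subn (computable_proj 0) (computable_proj 1))) => v.
by rewrite -subn_eq0; case: (nth 0 v 0 - nth 0 v 1).
Qed.

Fixpoint triangular n := if n is n'.+1 then triangular n' + n'.+1 else 0.

Lemma leq_triangular : {homo triangular : m n / m <= n}.
Proof. by apply: homo_leq leqnn leq_trans _ => n; exact: leq_addr. Qed.

Fixpoint diag n :=
  if n is n'.+1 then diag n' + (triangular (diag n').+1 <= n'.+1) else 0.

Lemma diag_spec n : triangular (diag n) <= n < triangular (diag n).+1.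
Proof.
elim: n => [|n IH] //=; move: IH; set d := diag n.
by case: (leqP (triangular d.+1) n.+1) => /= H IH; rewrite ?addn0 ?addn1 /=; lia.
Qed.

Lemma diag_unique d n : triangular d <= n < triangular d.+1 -> diag n = d.
Proof.
have [Hl Hr] := andP (diag_spec n); move=> /andP [Hl' Hr'].
case: (ltngtP (diag n) d) => // H.
- by have := leq_triangular H; lia.
- by have := leq_triangular H; lia.
Qed.

Definition pairn x y := triangular (x + y) + x.
Definition unpair1 n := n - triangular (diag n).
Definition unpair2 n := diag n - unpair1 n.

Lemma diag_pairn x y : diag (pairn x y) = x + y.
Proof. by apply: diag_unique; rewrite /= /pairn; lia. Qed.

Lemma unpair1_pairn x y : unpair1 (pairn x y) = x.
Proof. by rewrite /unpair1 diag_pairn /pairn addKn. Qed.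

Lemma unpair2_pairn x y : unpair2 (pairn x y) = y.
Proof. by rewrite /unpair2 diag_pairn unpair1_pairn addKn. Qed.

Definition seq_code (l : seq nat) := foldr pairn 0 l.
Definition nth_code i n := unpair1 (iter i unpair2 n).

Lemma nth_seq_code l i : i < size l -> nth_code i (seq_code l) = nth 0 l i.
Proof.
rewrite /nth_code; elim: l i => [|x l IH] [|i] //=; first by rewrite unpair1_pairn.
by rewrite ltnS -iterS iterSr unpair2_pairn => /IH.
Qed.

Lemma nth_code_ord_cat k s (f : 'I_k -> nat) (h : 'I_s -> nat) :
  exists n, (forall j : 'I_k, nth_code j n = f j) /\
            (forall l : 'I_s, nth_code (k + l) n = h l).
Proof.
pose L := [seq f j | j <- enum 'I_k] ++ [seq h l | l <- enum 'I_s].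
have sizeL : size L = k + s by rewrite size_cat !size_map -!enumT !size_enum_ord.
exists (seq_code L); split=> [j|l].
  rewrite nth_seq_code ?sizeL ?(leq_trans (ltn_ord j) (leq_addr _ _)) //.
  by rewrite nth_cat size_map size_enum_ord ltn_ord (nth_map j) ?size_enum_ord ?nth_ord_enum.
rewrite nth_seq_code ?sizeL ?ltn_add2l //.
rewrite nth_cat size_map size_enum_ord ltnNge leq_addr /= addKn.
by rewrite (nth_map l) ?size_enum_ord ?nth_ord_enum.
Qed.

Lemma computable_triangular : computable1 triangular.
Proof.
apply: (computable1_rec (g := fun n r => r + n.+1)) => //.
exact: computable_comp2 computable_addn (computable_proj 1) computable_succ.
Qed.

Lemma computable_diag : computable1 diag.
Proof.
apply: (computable1_rec (g := fun n r => r + (triangular r.+1 <= n.+1))) => //.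
apply: computable_comp2 computable_addn (computable_proj 1) _.
apply: computable_comp2 computable_leqn _ computable_succ.
exact: computable_comp1 computable_triangular
  (computable_comp1 computable_succ (computable_proj 1)).
Qed.

Lemma computable_unpair1 : computable1 unpair1.
Proof.
exact: computable_comp2 computable_subn (computable_proj 0)
  (computable_comp1 computable_triangular computable_diag).
Qed.

Lemma computable_unpair2 : computable1 unpair2.
Proof. exact: computable_comp2 computable_subn computable_diag computable_unpair1. Qed.

Lemma computable_nth_code i : computable1 (nth_code i).
Proof.
apply: computable_comp1 computable_unpair1 _.
elim: i => [|i IH] /=; [exact: computable_proj | exact: computable_comp1 computable_unpair2 IH].
Qed.

Lemma computable_odd : computable1 odd.
Proof.
apply: (computable1_rec (g := fun _ r => 1 - r)) => [||n] //=; last by case: odd.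
exact: computable_comp2 computable_subn (computable_const 1) (computable_proj 1).
Qed.

Lemma computable_half : computable1 half.
Proof.
apply: (computable1_rec (g := fun n r => r + odd n)) => [||n] //.
  exact: computable_comp2 computable_addn (computable_proj 1)
    (computable_comp1 computable_odd (computable_proj 0)).
by rewrite -{1}[n]odd_double_half; case: odd; rewrite /= ?uphalf_double ?doubleK; lia.
Qed.

Lemma computable_sum m (F : nat -> seq nat -> nat) : (forall i, computable (F i)) ->
  computable (fun v => \sum_(i < m) F i v).
Proof.
move=> HF; elim: m => [|m IH].
  by apply: computable_ext (computable_const 0) => v; rewrite big_ord0.
apply: computable_ext (computable_comp2 computable_addn IH (HF m)) => v.
by rewrite big_ord_recr.
Qed.

Lemma reval_mu_zero (g : seq nat -> nat) cg v : (forall w, reval cg w (g w)) ->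
  (exists n, g (n :: v) = 0) -> exists2 n, reval (cMu cg) v n & g (n :: v) = 0.
Proof.
move=> Hg [n0 Hn0]; have exP : exists n, g (n :: v) == 0 by exists n0; apply/eqP.
case: (ex_minnP exP) => n /eqP Hn Hmin; exists n => //.
apply: ev_mu => [|m Hm]; first by rewrite -Hn.
case E: (g (m :: v)) => [|y]; last by exists y; rewrite -E.
by have := Hmin m (introT eqP E); rewrite leqNgt Hm.
Qed.

Lemma reval_prec_invariant (P : nat -> nat -> Prop) cF cG v y0 :
  reval cF v y0 -> P 0 y0 ->
  (forall t y, P t y -> exists2 z, reval cG [:: t, y & v] z & P t.+1 z) ->
  forall t, exists2 y, reval (cPrec cF cG) (t :: v) y & P t y.
Proof.
move=> HF P0 HG; elim=> [|t [y Hy /HG [z Hz Pz]]]; first by exists y0; first exact: ev_prec0.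
by exists z; first exact: ev_precS Hy Hz.
Qed.

Definition zdec (n : nat) : int := if odd n then Negz n./2 else Posz n./2.

Lemma zdecK : cancel zdec zcode.
Proof. by move=> n; rewrite /zdec -[in RHS](odd_double_half n); case: odd. Qed.

Lemma zcodeK : cancel zcode zdec.
Proof. by case=> m; rewrite /zdec /= ?odd_double ?doubleK //= uphalf_double. Qed.

Lemma computable_recursive2 f : recursive2 f ->
  computable2 (fun x y => zcode (f (zdec x) (zdec y))).
Proof.
move=> [c Hc]; exists (cComp c [:: cProj 0; cProj 1]) => v.
apply: (ev_comp (ys := [:: nth 0 v 0; nth 0 v 1])); first by do !constructor.
by have := Hc (zdec (nth 0 v 0)) (zdec (nth 0 v 1)); rewrite !zdecK.
Qed.

Lemma computable1_reval c h : (forall n, reval c [:: n] (h n)) -> computable1 h.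
Proof.
move=> Hc; exists (cComp c [:: cProj 0]) => v; apply: ev_comp (Hc _).
by apply: all2P_cons (ev_proj 0 v) (all2P_nil _).
Qed.

Lemma recursive1_of_halves (f : int -> int) :
  computable1 (fun n => zcode (f n)) -> computable1 (fun n => zcode (f (Negz n))) ->
  recursive1 f.
Proof.
move=> HP HN.
have Hhalf h : computable1 h -> computable (fun v => h (nth 0 v 0)./2).
  by move=> Hh; apply: computable_comp1 Hh computable_half.
(* Primitive recursion over the bit [odd n] is a conditional: zero steps return
   the first parameter, one step (reading index 3 of [0 :: _ :: params]) the second. *)
have /= := computable_primrec (computable_proj 0) (computable_proj 3) computable_odd
  (hs := [:: fun v => zcode (f (nth 0 v 0)./2); fun v => zcode (f (Negz (nth 0 v 0)./2))])
  (conj (Hhalf _ HP) (conj (Hhalf _ HN) I)).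
move=> [c Hc]; exists c => a; have := Hc [:: zcode a].
by case: a => m; rewrite /= ?odd_double /= ?doubleK ?uphalf_double.
Qed.

Definition join_env (T A B : Type) (y : A -> T) (x : B -> T) (v : A + B) : T :=
  match v with inl i => y i | inr j => x j end.

Definition graph (g : int -> int) (a : 'I_2 -> int) : Prop := a ord_max = g (a ord0).

Lemma ord2_neq0 (i : 'I_2) : i != ord0 -> i = ord_max.
Proof. by case: i => [[|[|m]] Hm] // _; apply: val_inj. Qed.

Section RecursiveRing.

Variables (R : comNzRingType) (e : R -> int).
Hypothesis e_inj : injective e.
Hypothesis e_set : recursive_set (fun z => exists r, e r = z).
Variables fa fm : int -> int -> int.
Hypotheses (fa_rec : recursive2 fa) (fm_rec : recursive2 fm).
Hypothesis fa_e : forall x y, fa (e x) (e y) = e (x + y)%R.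
Hypothesis fm_e : forall x y, fm (e x) (e y) = e (x * y)%R.

Definition ecode (r : R) : nat := zcode (e r).

Lemma ecode_inj : injective ecode.
Proof. by move=> r r' /(can_inj zcodeK) /e_inj. Qed.

Definition is_ecode n : bool :=
  if excluded_middle_informative (exists r, ecode r = n) is left _ then true else false.

Definition ring_of_code n : R :=
  if excluded_middle_informative (exists r, ecode r = n) is left H
  then sval (constructive_indefinite_description _ H) else 0%R.

Lemma ring_of_codeK n : is_ecode n -> ecode (ring_of_code n) = n.
Proof.
rewrite /is_ecode /ring_of_code; case: excluded_middle_informative => // H _.
by case: constructive_indefinite_description.
Qed.

Lemma is_ecode_ecode r : is_ecode (ecode r).
Proof. by rewrite /is_ecode; case: excluded_middle_informative => // -[]; exists r. Qed.

Lemma computable_is_ecode : computable1 is_ecode.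
Proof.
have [c Hc] := e_set; apply: (computable1_reval (c := c)) => n.
have ecodeE : (exists r, ecode r = n) <-> exists r, e r = zdec n.
  by split=> -[r Hr]; exists r; rewrite -?Hr ?zcodeK // /ecode Hr zdecK.
have [Hin Hout] := Hc (zdec n); rewrite zdecK in Hin Hout.
rewrite /is_ecode; case: excluded_middle_informative => H.
  exact/Hin/ecodeE.
by apply: Hout => /ecodeE.
Qed.

Fixpoint peval_code (V : Type) (env : V -> nat) (p : pterm R V) : nat :=
  match p with
  | PVar v => env v
  | PConst c => ecode c
  | PAdd p q => zcode (fa (zdec (peval_code env p)) (zdec (peval_code env q)))
  | PMul p q => zcode (fm (zdec (peval_code env p)) (zdec (peval_code env q)))
  end.

Lemma peval_codeE V (t : V -> R) env p : (forall v, env v = ecode (t v)) ->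
  peval_code env p = ecode (peval t p).
Proof.
by move=> Ht; elim: p => //= [p -> q ->|p -> q ->]; rewrite !zcodeK ?fa_e ?fm_e.
Qed.

Lemma computable_peval_code V (env : seq nat -> V -> nat) p :
  (forall v, computable (env^~ v)) -> computable (fun w => peval_code (env w) p).
Proof.
move=> Henv; elim: p => [v|c|p IHp q IHq|p IHp q IHq] /=.
- exact: Henv.
- exact: computable_const.
- exact: computable_comp2 (computable_recursive2 fa_rec) IHp IHq.
- exact: computable_comp2 (computable_recursive2 fm_rec) IHp IHq.
Qed.

Variables (k : nat) (phi : int -> 'I_k -> R).
Hypothesis phi_inj : forall a b, (forall j, phi a j = phi b j) -> a = b.
Variables (g : int -> int) (s : nat) (p : pterm R ('I_2 * 'I_k + 'I_s)).
Hypothesis p_def : forall y, phi_image phi (graph g) y <->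
  exists x, peval (join_env y x) p = 0%R.

Definition encodes (a : int) (u : nat) := forall j : 'I_k, nth_code j u = ecode (phi a j).

(* On input [n :: t :: u :: _], with [u] encoding [phi a], the candidate [n] is
   read as the components of [phi (g a)] followed by the witnesses of [p]. *)
Definition search_env (w : seq nat) : 'I_2 * 'I_k + 'I_s -> nat :=
  join_env (fun ij : 'I_2 * 'I_k => nth_code ij.2 (nth 0 w (if ij.1 == ord0 then 2 else 0)))
           (fun l : 'I_s => nth_code (k + l) (nth 0 w 0)).

Definition search_cost (w : seq nat) : nat :=
  \sum_(i < k + s) (1 - is_ecode (nth_code i (nth 0 w 0)))
  + distn (peval_code (search_env w) p) (ecode 0).

Lemma computable_search_cost : computable search_cost.
Proof.
apply: computable_comp2 computable_addn _ _.
  apply: (@computable_sum _ (fun i v => 1 - is_ecode (nth_code i (nth 0 v 0)))) => i.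
  apply: computable_comp2 computable_subn (computable_const 1) _.
  exact: computable_comp1 computable_is_ecode (computable_nth_code i).
apply: computable_comp2 computable_distn _ (computable_const _).
apply: computable_peval_code => -[[i j]|l] /=; apply: computable_comp1 (computable_nth_code _) _.
all: exact: computable_proj.
Qed.

Lemma search_cost_exists a u t w : encodes a u -> exists n, search_cost [:: n, t, u & w] = 0.
Proof.
move=> Hu; pose a2 (i : 'I_2) := if i == ord0 then a else g a.
pose y (ij : 'I_2 * 'I_k) := phi (a2 ij.1) ij.2.
have [x Hx] : exists x, peval (join_env y x) p = 0%R by apply/p_def; exists a2.
have [n [Hphi Hx']] := nth_code_ord_cat (fun j => ecode (phi (g a) j)) (fun l => ecode (x l)).
exists n; apply/eqP; rewrite addn_eq0 sum_nat_eq0; apply/andP; split.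
  apply/forallP => i; rewrite subn_eq0 lt0b.
  by case: (splitP i) => [j|l] ->; rewrite ?Hphi ?Hx' is_ecode_ecode.
rewrite distn_eq0 (@peval_codeE _ (join_env y x)) ?Hx // => -[[i j]|l] /=; last exact: Hx'.
by rewrite /y /a2; case: eqP => [->|/eqP/ord2_neq0 ->]; rewrite ?Hu ?Hphi.
Qed.

Lemma search_cost_eq0 a u t w n : encodes a u -> search_cost [:: n, t, u & w] = 0 ->
  encodes (g a) n.
Proof.
move=> Hu /eqP; rewrite addn_eq0 sum_nat_eq0 distn_eq0 => /andP [/forallP Hval Hp0].
have valid i : i < k + s -> is_ecode (nth_code i n).
  by move=> Hi; have := Hval (Ordinal Hi); rewrite /= subn_eq0 lt0b.
pose y (ij : 'I_2 * 'I_k) :=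
  if ij.1 == ord0 then phi a ij.2 else ring_of_code (nth_code ij.2 n).
pose x (l : 'I_s) := ring_of_code (nth_code (k + l) n).
have /p_def [a2 [Ha2 Hy]] : exists x, peval (join_env y x) p = 0%R.
  exists x; apply: ecode_inj; rewrite -(eqP Hp0); symmetry; apply: peval_codeE.
  case=> [[i j]|l] /=; last by rewrite ring_of_codeK ?valid ?ltn_add2l.
  rewrite /y; case: eqP => _; first exact: Hu.
  by rewrite ring_of_codeK ?valid ?(leq_trans (ltn_ord j) (leq_addr _ _)).
have Ha : a2 ord0 = a by apply: phi_inj => j; rewrite -Hy.
move=> j; have := Hy ord_max j; rewrite /y /= Ha2 Ha => <-.
by rewrite ring_of_codeK ?valid ?(leq_trans (ltn_ord j) (leq_addr _ _)).
Qed.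

Lemma computable_iter_graph a0 (j : 'I_k) :
  computable1 (fun t => ecode (phi (iter t g a0) j)).
Proof.
have [u0 [Hu0 _]] := nth_code_ord_cat (fun j => ecode (phi a0 j)) (fun _ : 'I_0 => 0).
have [cF HF] := computable_const u0; have [cg Hcg] := computable_search_cost.
have [cJ HJ] := computable_nth_code j.
apply: (computable1_reval (c := cComp cJ [:: cPrec cF (cMu cg)])) => t.
have step t' u : encodes (iter t' g a0) u ->
    exists2 n, reval (cMu cg) [:: t'; u] n & encodes (iter t'.+1 g a0) n.
  move=> Hu; have [n Hn Hn0] := reval_mu_zero Hcg (search_cost_exists t' [::] Hu).
  by exists n; last exact: search_cost_eq0 Hu Hn0.
have [u Hu Hencu] := reval_prec_invariant (HF [::]) (Hu0 : encodes (iter 0 g a0) u0) step t.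
rewrite -Hencu; apply: ev_comp (HJ [:: u]).
exact: all2P_cons Hu (all2P_nil _).
Qed.

End RecursiveRing.

Lemma diophantine_graph_add (c : int) : diophantine (graph (+%R c)).
Proof.
exists 0, (PAdd (PAdd (PConst _ c) (PVar _ (inl ord0))) (PMul (PConst _ (-1)%R) (PVar _ (inl ord_max)))).
move=> t /=; rewrite mulN1r; split=> [->|[_ /eqP]]; first by exists (fun=> 0%R); rewrite subrr.
by rewrite subr_eq0 => /eqP.
Qed.

Unset Implicit Arguments. Set Strict Implicit.
Theorem mainTheorem9 (R : comNzRingType) (e : R -> int)
  (He : recursive_presentation e) (k : nat) (phi : int -> 'I_k -> R)
  (phi_inj : forall a b, (forall j, phi a j = phi b j) -> a = b)
  (Hdioph : forall (m : nat) (A : ('I_m -> int) -> Prop), (0 < m)%N ->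
     diophantine A -> diophantine (phi_image phi A)) :
  forall j : 'I_k, recursive1 (fun a => e (phi a j)).
Proof.
move=> j; case: He => e_inj e_set [fa [fa_rec fa_e]] [fm [fm_rec fm_e]].
have orbit c : computable1 (fun n => zcode (e (phi (iter n (+%R c) 0%R) j))).
  have [s [p p_def]] := Hdioph 2 _ isT (diophantine_graph_add c).
  exact: (computable_iter_graph e_inj e_set fa_rec fm_rec fa_e fm_e phi_inj p_def 0%R j).
apply: recursive1_of_halves.
  by apply: computable_ext (orbit 1%R) => v; rewrite /= iter_addr_0 natz.
have := computable_comp1 (orbit (-1)%R) computable_succ; apply: computable_ext => v.
by rewrite iter_addr_0 mulNrn natz NegzE.
Qed.
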